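(* Let $n,t\ge1$. Let $\nu$ be the distribution of the random diagonal unitary $U=\exp\!\big(\mathrm i\theta\bigotimes_{j=1}^nZ^{a_j}\big)$ where $a\in\{0,1\}^n$ is uniform and $\theta$ is uniform on $(0,2\pi]$, independently, and let $\nu_q$ be defined identically except that $\theta$ is uniform on $\{2\pi l/q\}_{l=0}^{q-1}$. Then $g_D(\nu,t)\le 1-\frac{1}{2t}$, and if $q>2t$ then also $g_D(\nu_q,t)\le1-\frac1{2t}$.
   Context: $Z^0=I$, $Z^1=Z$. $\mu_D$ denotes the Haar measure on diagonal $2^n\times2^n$ unitaries (independent uniform phases on the diagonal entries). For a distribution $\nu$ on diagonal unitaries, $g_D(\nu,t)=\big\|\mathbb E_{U\sim\nu}U^{\otimes t}\otimes\overline U^{\otimes t}-\mathbb E_{U\sim\mu_D}U^{\otimes t}\otimes\overline U^{\otimes t}\big\|_\infty$ (operator norm), where $\overline U$ is the entrywise complex conjugate. *)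

From HB Require Import structures.
From mathcomp Require Import all_boot all_order all_algebra.
From mathcomp Require Import complex.
From mathcomp Require Import all_classical all_reals all_analysis.
Set Implicit Arguments. Unset Strict Implicit. Unset Printing Implicit Defensive.
Import Order.TTheory GRing.Theory Num.Theory.
Local Open Scope ring_scope.
Local Open Scope complex_scope.
Local Open Scope classical_set_scope.

Definition qbasis (n : nat) := {ffun 'I_n -> bool}.

Definition cmat (R : realType) (I : finType) := I -> I -> R[i].

Definition expi (R : realType) (phi : R) : R[i] := (cos phi) +i* (sin phi).

Definition cabs2 (R : realType) (z : R[i]) : R := (@complex.Re R z) ^+ 2 + (@complex.Im R z) ^+ 2.
Definition vnorm (R : realType) (I : finType) (v : I -> R[i]) : R :=
  Num.sqrt (\sum_(i : I) cabs2 (v i)).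

Definition mapply (R : realType) (I : finType) (A : cmat R I) (v : I -> R[i]) :
  I -> R[i] := fun i => \sum_(j : I) A i j * v j.

Definition opnorm (R : realType) (I : finType) (A : cmat R I) : R :=
  sup [set vnorm (mapply A v) | v in [set v : I -> R[i] | vnorm v <= 1]].

Definition diagm (R : realType) (I : finType) (d : I -> R[i]) : cmat R I :=
  fun i j => if i == j then d i else 0.

Definition conjm (R : realType) (I : finType) (A : cmat R I) : cmat R I :=
  fun i j => ((A i j)^*)%C.

Definition tensm (R : realType) (I J : finType) (A : cmat R I) (B : cmat R J) :
  cmat R (I * J)%type := fun p q => A p.1 q.1 * B p.2 q.2.

Definition tpow (R : realType) (I : finType) (t : nat) (A : cmat R I) :
  cmat R {ffun 'I_t -> I} := fun i j => \prod_(k < t) A (i k) (j k).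

Definition moment (R : realType) (I : finType) (t : nat) (A : cmat R I) :=
  tensm (@tpow R I t A) (@tpow R I t (conjm A)).

Definition rscale (R : realType) (r : R) (z : R[i]) : R[i] := (r * @complex.Re R z) +i* (r * @complex.Im R z).

Definition avg_cont (R : realType) (g : R -> R[i]) : R[i] :=
  rscale (2 * pi)^-1
    ((Rintegral lebesgue_measure `]0, 2 * pi] (fun th => @complex.Re R (g th))) +i*
     (Rintegral lebesgue_measure `]0, 2 * pi] (fun th => @complex.Im R (g th)))).

Definition avg_disc (R : realType) (q : nat) (g : R -> R[i]) : R[i] :=
  rscale (q%:R)^-1 (\sum_(l < q) g (2 * pi * l%:R / q%:R)).

(* A distribution on diagonal unitaries on n qubits is represented by its
   expectation functional F |-> E_{U ~ nu} F(U). *)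
Definition distr_diag (R : realType) (n : nat) :=
  (cmat R (qbasis n) -> R[i]) -> R[i].

(* Z^{a} = (x)_j Z^{a_j}: diagonal entry at x is prod_j (-1)^{a_j x_j} *)
Definition zsign (R : realType) (n : nat) (a x : qbasis n) : R :=
  \prod_(j < n) (if a j && x j then -1 else 1).

(* exp(i theta Z^a): exponential of a diagonal matrix, computed entrywise *)
Definition Uexp (R : realType) (n : nat) (a : qbasis n) (th : R) : cmat R (qbasis n) :=
  diagm (fun x => expi (th * zsign R a x)).

Definition nu_cont (R : realType) (n : nat) : distr_diag R n :=
  fun F => rscale ((2 ^ n)%N)%:R^-1 (\sum_(a : qbasis n) avg_cont (fun th => F (Uexp a th))).

Definition nu_disc (R : realType) (n q : nat) : distr_diag R n :=
  fun F => rscale ((2 ^ n)%N)%:R^-1 (\sum_(a : qbasis n) avg_disc q (fun th => F (Uexp a th))).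

Fixpoint iter_avg (R : realType) (X : finType) (s : seq X)
    (F : (X -> R) -> R[i]) (phi : X -> R) : R[i] :=
  match s with
  | [::] => F phi
  | x :: s' => avg_cont (fun th => iter_avg s' F (fun y => if y == x then th else phi y))
  end.

(* Haar measure mu_D on diagonal unitaries: independent uniform phases on all
   2^n diagonal entries *)
Definition haar_diag (R : realType) (n : nat) : distr_diag R n :=
  fun F => iter_avg (enum (qbasis n))
             (fun phi => F (diagm (fun x => expi (phi x)))) (fun _ => 0).

Definition moment_op (R : realType) (n t : nat) (nu : distr_diag R n) :=
  fun i j => nu (fun U => @moment R _ t U i j).

Definition gD (R : realType) (n : nat) (nu : distr_diag R n) (t : nat) : R :=
  opnorm (fun i j => @moment_op R n t nu i j - @moment_op R n t (@haar_diag R n) i j).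

(* Every unitary involved is diagonal, so every moment operator is diagonal in the
   basis of index pairs p = (i, j) of t-tuples of basis states, and its p-th entry
   only depends on the integer function c_p x = #{k | i_k = x} - #{k | j_k = x}.
   Under the Haar measure the entry is [c_p = 0].  Averaging exp(i theta Z^a) over
   theta kills the entry unless the Walsh coefficient
   c_p^(a) = sum_x (-1)^(a.x) c_p x vanishes, so under nu it is the fraction of
   the a with c_p^(a) = 0; the same holds for nu_q because |c_p^(a)| <= 2t < q.
   If c_p <> 0, Walsh inversion gives 2^n <= sum_a |c_p^(a)| <= 2t #{a | c_p^(a) <> 0},
   so every diagonal entry of the difference lies in [0, 1 - 1/(2t)]. *)

From HB Require Import structures.
From mathcomp Require Import all_boot all_order all_algebra.
From mathcomp Require Import complex.
From mathcomp Require Import all_classical all_reals all_analysis.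
From mathcomp Require Import ring lra.
Set Implicit Arguments. Unset Strict Implicit. Unset Printing Implicit Defensive.
Import numFieldNormedType.Exports.
Import Order.TTheory GRing.Theory Num.Theory.
Local Open Scope ring_scope.

Section CircleAverage.
Variable R : realType.
Local Notation mu := (@lebesgue_measure R).

Lemma is_derive_mull (k x : R) : is_derive x 1 (fun y : R => k * y) k.
Proof.
have := @is_deriveZ R R R id k x 1 1 (is_derive_id _ _).
by rewrite /GRing.scale /= mulr1.
Qed.

Lemma is_derive_continuous [f : R -> R] [x df : R] :
  is_derive x 1 f df -> continuous_at x f.
Proof. by case=> fx _; apply/differentiable_continuous/derivable1_diffP. Qed.

Lemma is_derive_trig_primitive (m a b x : R) : m != 0 ->
  is_derive x 1 (fun x => m^-1 * (a * sin (m * x) + b * cos (m * x)))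
    (a * cos (m * x) - b * sin (m * x)).
Proof.
move=> m0.
have ds : is_derive x 1 (fun y : R => sin (m * y)) (cos (m * x) * m).
  exact: (@is_derive1_comp _ sin _ x _ _ _ (is_derive_mull m x)).
have dc : is_derive x 1 (fun y : R => cos (m * y)) (- sin (m * x) * m).
  exact: (@is_derive1_comp _ cos _ x _ _ _ (is_derive_mull m x)).
have -> : (fun y => m^-1 * (a * sin (m * y) + b * cos (m * y))) =
    m^-1 \*: (a \*: (fun y => sin (m * y)) + b \*: (fun y => cos (m * y))).
  by apply: funext.
apply: (is_derive_eq (is_deriveZ m^-1 (is_deriveD (is_deriveZ a ds) (is_deriveZ b dc)))).
by rewrite /GRing.scale /=; field.
Qed.

Lemma continuous_trig_comb (m a b : R) :
  continuous (fun x => a * cos (m * x) - b * sin (m * x)).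
Proof.
move=> x; have [->|m0] := eqVneq m 0.
  under eq_fun do rewrite mul0r cos0 sin0.
  exact: cvg_cst.
have := is_derive_continuous (@is_derive_trig_primitive m (- b * m) (a * m) x m0).
by congr continuous_at; apply: funext => y; field.
Qed.

Lemma trig_intr_2pi (k : int) :
  cos (k%:~R * (2 * pi)) = 1 :> R /\ sin (k%:~R * (2 * pi)) = 0 :> R.
Proof.
have nat2pi (l : nat) : cos (l%:R * (2 * pi)) = 1 :> R /\ sin (l%:R * (2 * pi)) = 0 :> R.
  have -> : l%:R * (2 * pi) = 0 + pi *+ 2 *+ l :> R by rewrite add0r !mulr_natl.
  by rewrite (periodicn (@cosD2pi R)) (periodicn (@sinD2pi R)) cos0 sin0.
case: k => l; first exact: nat2pi.
by rewrite NegzE intrN mulNr cosN sinN; have [-> ->] := nat2pi l.+1; rewrite oppr0.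
Qed.

Lemma Rintegral_trig_period (k : int) (a b : R) : k != 0 ->
  \int[mu]_(x in `]0, 2 * pi]) (a * cos (k%:~R * x) - b * sin (k%:~R * x)) = 0.
Proof.
move=> k0; set m : R := k%:~R.
have m0 : m != 0 by rewrite intr_eq0.
have pi0 : (0 < 2 * pi :> R) by rewrite mulr_gt0 // pi_gt0.
have cf := @continuous_trig_comb m a b.
have dF x := @is_derive_trig_primitive m a b x m0.
rewrite Rintegral_itv_obnd_cbnd; last first.
  apply: (@integrableS _ _ _ mu `[0, 2 * pi]) => //; first exact: subset_itv_oc_cc.
  apply: continuous_compact_integrable; first exact: segment_compact.
  exact: continuous_subspaceT.
rewrite /Rintegral (@continuous_FTC2 _ _
    (fun x => m^-1 * (a * sin (m * x) + b * cos (m * x)))) //.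
- have [c s] := @trig_intr_2pi k.
  by rewrite -EFinB /= /m c s !mulr0 sin0 cos0 mulr0 add0r subrr.
- exact: continuous_subspaceT.
- split.
  + by move=> x _; case: (dF x).
  + exact/cvg_at_right_filter/(is_derive_continuous (dF 0)).
  + exact/cvg_at_left_filter/(is_derive_continuous (dF (2 * pi))).
- by move=> x _; rewrite derive1E; case: (dF x) => _ ->.
Qed.

Lemma lebesgue_measure_02pi : fine (mu `]0, 2 * pi]) = 2 * pi :> R.
Proof.
have pi0 : (0 < 2 * pi :> R) by rewrite mulr_gt0 // pi_gt0.
by rewrite lebesgue_measure_itv /= lte_fin pi0 /= subr0.
Qed.

Lemma Rintegral_cst_02pi (c : R) : \int[mu]_(x in `]0, 2 * pi]) c = c * (2 * pi).
Proof. by rewrite Rintegral_cst // lebesgue_measure_02pi. Qed.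

Lemma avg_cont_expi (K : R[i]) (k : int) :
  avg_cont (fun th => K * expi (k%:~R * th)) = if k == 0 then K else 0.
Proof.
case: K => a b; rewrite /avg_cont /expi /=.
have -> : (fun th : R => a * sin (k%:~R * th) + b * cos (k%:~R * th)) =
    (fun th : R => b * cos (k%:~R * th) - (- a) * sin (k%:~R * th)).
  by apply: funext => th; rewrite mulNr opprK addrC.
have [->|k0] := eqVneq k 0; last by rewrite !Rintegral_trig_period // /rscale /= mulr0.
have pi0 : (2 * pi :> R) != 0 by rewrite mulf_neq0 // gt_eqF // pi_gt0.
have cst (c d : R) : (fun th : R => c * cos (0%:~R * th) - d * sin (0%:~R * th)) = (fun _ => c).
  by apply: funext => th; rewrite mul0r cos0 sin0 mulr1 mulr0 subr0.
by rewrite !cst !Rintegral_cst_02pi /rscale /= !(mulrC _^-1) !mulfK.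
Qed.

End CircleAverage.

Section ComplexExponential.
Variable R : realType.

Lemma expiD (x y : R) : expi (x + y) = expi x * expi y.
Proof. by rewrite /expi cosD sinD /=; congr (_ +i* _)%C; ring. Qed.

Lemma expi0 : expi (0 : R) = 1.
Proof. by rewrite /expi cos0 sin0. Qed.

Lemma expiMn (x : R) (l : nat) : expi x ^+ l = expi (l%:R * x).
Proof.
elim: l => [|l IH]; first by rewrite expr0 mul0r expi0.
by rewrite exprS IH -expiD mulrSr mulrDl mul1r addrC.
Qed.

Lemma expi_sum (I : Type) (r : seq I) (f : I -> R) :
  \prod_(k <- r) expi (f k) = expi (\sum_(k <- r) f k).
Proof. by rewrite (big_morph _ expiD expi0). Qed.

Lemma conj_expi (x : R) : ((expi x)^*)%C = expi (- x).
Proof. by rewrite /expi cosN sinN. Qed.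

Lemma rscaleE (r : R) (z : R[i]) : rscale r z = (r%:C)%C * z.
Proof. by case: z => a b; rewrite /rscale /=; congr (_ +i* _)%C; ring. Qed.

Lemma sin_neq0 (y : R) : 0 < `|y| < pi -> sin y != 0.
Proof.
case/andP => y0 ypi; have [yp|yn] := ltP 0 y.
  by rewrite gt_eqF // sin_gt0_pi // yp -(gtr0_norm yp).
have yl : y < 0 by rewrite lt_neqAle yn andbT; apply: contraTneq y0 => ->; rewrite normr0 ltxx.
by rewrite -oppr_eq0 -sinN gt_eqF // sin_gt0_pi // -(ltr0_norm yl) y0 ypi.
Qed.

Lemma expi_neq1 (x : R) : 0 < `|x| < 2 * pi -> expi x != 1.
Proof.
move=> x02pi; apply/negP => /eqP[c1 _].
have s0 : sin (x / 2) != 0.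
  apply: sin_neq0; rewrite normrM [`|2^-1|]ger0_norm ?invr_ge0 ?ler0n //.
  by rewrite pmulr_lgt0 ?invr_gt0 ?ltr0n // ltr_pdivrMr ?ltr0n // mulrC.
suff /eqP : 2 * sin (x / 2) ^+ 2 = 0 by rewrite mulf_eq0 pnatr_eq0 expf_eq0 /= (negbTE s0).
move: c1; rewrite [x in cos x = _](splitr x) cosD -!expr2 cos2sin2; lra.
Qed.

Lemma avg_disc_expi (K : R[i]) (k : int) (q : nat) : (`|k| < q)%N ->
  avg_disc q (fun th => K * expi (k%:~R * th)) = if k == 0 then K else 0.
Proof.
move=> kq; have q0 : (0 < q)%N by apply: leq_ltn_trans kq.
have qR : (q%:R : R) != 0 by rewrite pnatr_eq0 -lt0n.
set z := @expi R (2 * pi * k%:~R / q%:R).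
have zE (l : 'I_q) : expi (k%:~R * (2 * pi * l%:R / q%:R)) = z ^+ l.
  by rewrite /z expiMn; congr expi; field.
rewrite /avg_disc rscaleE; under eq_bigr do rewrite zE; rewrite -mulr_sumr.
have [k0|k0] := eqVneq k 0.
  have -> : z = 1 by rewrite /z k0 mulr0z mulr0 mul0r expi0.
  under eq_bigr do rewrite expr1n.
  by rewrite sumr_const card_ord mulrCA -(rmorph_nat (real_complex R)) -rmorphM mulVf ?mulr1.
suff -> : \sum_(i < q) z ^+ i = 0 by rewrite !mulr0.
have z1 : z - 1 != 0.
  have pi0 : (0 < 2 * pi :> R) by rewrite mulr_gt0 // pi_gt0.
  rewrite subr_eq0 /z; apply: expi_neq1.
  rewrite -mulrA normrM (gtr0_norm pi0) normrM normfV (gtr0_norm (x := q%:R)) ?ltr0n //.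
  rewrite -intr_norm -natr_absz pmulr_rgt0 // divr_gt0 ?ltr0n ?absz_gt0 //=.
  by rewrite -[ltRHS]mulr1 ltr_pM2l // ltr_pdivrMr ?ltr0n // mul1r ltr_nat.
have : z ^+ q - 1 = 0.
  rewrite /z expiMn (_ : q%:R * _ = k%:~R * (2 * pi)); last by field.
  by have [c s] := @trig_intr_2pi R k; rewrite /expi c s subrr.
by rewrite subrX1 => /eqP; rewrite mulf_eq0 (negbTE z1) => /eqP.
Qed.

End ComplexExponential.

Section Walsh.
Variable n : nat.
Implicit Types (a x y : qbasis n) (c : qbasis n -> int).

Definition walsh a x : int := \prod_(j < n) (if a j && x j then -1 else 1).

Definition walsh_transform c a : int := \sum_x walsh a x * c x.

Lemma card_qbasis : #|qbasis n| = (2 ^ n)%N.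
Proof. by rewrite card_ffun card_bool card_ord. Qed.

Lemma normr_walsh a x : `|walsh a x| = 1.
Proof. by rewrite normr_prod big1 // => j _; case: ifP; rewrite ?normrN normr1. Qed.

Lemma walsh_orthogonal x y :
  \sum_a walsh a x * walsh a y = if x == y then 2 ^+ n else 0.
Proof.
under eq_bigr do rewrite -big_split /=.
rewrite -(bigA_distr_bigA (fun j (b : bool) =>
  (if b && x j then -1 else 1) * (if b && y j then -1 else 1) : int)).
under eq_bigr do rewrite big_bool /=.
have [<-|xy] := eqVneq x y.
  rewrite (eq_bigr (fun _ => 2)) ?prodr_const ?card_ord // => j _.
  by case: (x j); rewrite ?mulrNN !mulr1.
have [j xyj] : exists j, x j != y j.
  apply/existsP; apply: contraNT xy; rewrite negb_exists => /forallP xy.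
  by apply/eqP/ffunP => j; apply/eqP; move: (xy j); rewrite negbK.
rewrite (bigD1 j) //=.
by move: xyj; case: (x j); case: (y j); rewrite //= mulr1 ?mulrN ?mulNr mulr1 ?subrr ?addNr mul0r.
Qed.

Lemma walsh_inversion c x :
  \sum_a walsh_transform c a * walsh a x = 2 ^+ n * c x.
Proof.
under eq_bigr do rewrite mulr_suml.
rewrite exchange_big /=.
under eq_bigr do (under eq_bigr do rewrite mulrAC; rewrite -mulr_suml walsh_orthogonal).
by rewrite (bigD1 x) //= eqxx big1 ?addr0 // => y /negbTE ->; rewrite mul0r.
Qed.

(* Walsh inversion at [x]: 2^n <= 2^n |c x| <= sum_a |c^(a)|. *)
Lemma walsh_support_lower_bound c x (T : int) : c x != 0 ->
  (forall a, `|walsh_transform c a| <= T) ->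
  2 ^+ n <= T * #|[pred a | walsh_transform c a != 0]|%:R.
Proof.
move=> cx bT; have n0 : (0 : int) <= 2 ^+ n by rewrite exprn_ge0.
apply: le_trans (_ : `|2 ^+ n * c x| <= _).
  by rewrite normrM ger0_norm // ler_peMr // -gtz0_ge1 normr_gt0.
rewrite -walsh_inversion (le_trans (ler_norm_sum _ _ _)) //.
rewrite (bigID [pred a | walsh_transform c a == 0]) /= big1 ?add0r; last first.
  by move=> a /eqP ->; rewrite mul0r normr0.
rewrite mulr_natr -sumr_const; apply: ler_sum => a _.
by rewrite normrM normr_walsh mulr1.
Qed.

End Walsh.

Section DiagonalMoments.
Variables (R : realType) (I : finType) (t : nat).
Local Notation word := {ffun 'I_t -> I}.

Definition occ (i : word) (x : I) : nat := (\sum_(k < t) (i k == x))%N.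

Definition occ_diff (p : word * word) (x : I) : int := (occ p.1 x)%:Z - (occ p.2 x)%:Z.

Lemma sum_occ (V : zmodType) (i : word) (g : I -> V) :
  \sum_k g (i k) = \sum_x g x *+ occ i x.
Proof.
under [RHS]eq_bigr do rewrite -sumrMnr.
rewrite exchange_big /=; apply: eq_bigr => k _.
rewrite (bigD1 (i k)) //= eqxx mulr1n big1 ?addr0 // => x.
by rewrite eq_sym => /negbTE ->.
Qed.

Lemma sum_occ_diff (p : word * word) (phi : I -> R) :
  \sum_k phi (p.1 k) - \sum_k phi (p.2 k) = \sum_x (occ_diff p x)%:~R * phi x.
Proof.
rewrite !sum_occ -sumrB; apply: eq_bigr => x _.
by rewrite /occ_diff intrB mulrBl -!pmulrn !mulr_natl.
Qed.

Lemma tpow_diag (d : I -> R[i]) (i j : word) :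
  @tpow R I t (diagm d) i j = if i == j then \prod_k d (i k) else 0.
Proof.
rewrite /tpow /diagm; have [<-|ij] := eqVneq i j.
  by apply: eq_bigr => k _; rewrite eqxx.
have [k ijk] : exists k, i k != j k.
  apply/existsP; apply: contraNT ij; rewrite negb_exists => /forallP ij.
  by apply/eqP/ffunP => k; apply/eqP; move: (ij k); rewrite negbK.
by rewrite (bigD1 k) //= (negbTE ijk) mul0r.
Qed.

Lemma conjm_diag (d : I -> R[i]) : conjm (diagm d) = diagm (fun x => ((d x)^*)%C).
Proof.
apply: funext => i; apply: funext => j; rewrite /conjm /diagm.
by case: ifP => //= _; rewrite oppr0.
Qed.

Lemma moment_diag_expi (phi : I -> R) (p q : word * word) :
  @moment R I t (diagm (fun x => expi (phi x))) p q =
  (p == q)%:R * expi (\sum_x (occ_diff p x)%:~R * phi x).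
Proof.
rewrite /moment /tensm conjm_diag !tpow_diag; case: p q => [i j] [i' j'].
rewrite xpair_eqE; have [_|_] := eqVneq i i'; last by rewrite !mul0r.
have [_|_] := eqVneq j j'; last by rewrite mulr0 mul0r.
under [X in _ * X]eq_bigr do rewrite conj_expi.
by rewrite mul1r !expi_sum -expiD sumrN sum_occ_diff.
Qed.

End DiagonalMoments.

Lemma iter_avg_expi (R : realType) (X : finType) (s : seq X) (c : X -> int)
    (K : R[i]) (phi : X -> R) : uniq s ->
  iter_avg s (fun psi => K * expi (\sum_x (c x)%:~R * psi x)) phi =
  (if all (fun x => c x == 0) s then K else 0) *
    expi (\sum_(x | x \notin s) (c x)%:~R * phi x).
Proof.
elim: s phi => [//|x0 s IH] phi /= /andP[x0s us].
have -> : (fun th => iter_avg s (fun psi => K * expi (\sum_x (c x)%:~R * psi x))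
                (fun y => if y == x0 then th else phi y)) =
  (fun th => (if all (fun x => c x == 0) s then K else 0) *
     expi (\sum_(x | (x \notin s) && (x != x0)) (c x)%:~R * phi x) * expi ((c x0)%:~R * th)).
  apply: funext => th; rewrite IH // (bigD1 x0) //= eqxx expiD mulrA mulrAC.
  by congr (_ * expi _ * _); apply: eq_bigr => x /andP[_ /negbTE ->].
have -> : \sum_(x | x \notin x0 :: s) (c x)%:~R * phi x =
    \sum_(x | (x \notin s) && (x != x0)) (c x)%:~R * phi x.
  by apply: eq_bigl => x; rewrite in_cons negb_or andbC.
by rewrite avg_cont_expi; case: (c x0 == 0); rewrite ?mul0r.
Qed.

Section DiagonalOperatorNorm.
Variable R : realType.

Lemma cabs2_ge0 (z : R[i]) : 0 <= cabs2 z.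
Proof. by rewrite /cabs2 addr_ge0 // sqr_ge0. Qed.

Lemma cabs2_scale (r : R) (z : R[i]) : cabs2 ((r%:C)%C * z) = r ^+ 2 * cabs2 z.
Proof. by case: z => a b; rewrite /cabs2 /=; ring. Qed.

Lemma opnorm_diag_le (I : finType) (D : cmat R I) (e : I -> R) (M : R) :
  0 <= M -> (forall i, 0 <= e i <= M) ->
  (forall i j, D i j = (i == j)%:R * (e i)%:C%C) -> opnorm D <= M.
Proof.
move=> M0 eM De; apply: ge_sup.
  exists (vnorm (mapply D (fun _ => 0))), (fun _ => 0) => //=.
  rewrite /vnorm big1 ?sqrtr0 // => i _.
  by rewrite /cabs2 /= expr0n /= addr0.
move=> _ [v /= v1 <-].
have Dv i : mapply D v i = (e i)%:C%C * v i.
  rewrite /mapply (bigD1 i) //= De eqxx mul1r big1 ?addr0 // => j /negbTE ji.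
  by rewrite De eq_sym ji !mul0r.
rewrite /vnorm (eq_bigr (fun i => e i ^+ 2 * cabs2 (v i))); last first.
  by move=> i _; rewrite Dv cabs2_scale.
apply: (@le_trans _ _ (Num.sqrt (M ^+ 2 * \sum_i cabs2 (v i)))).
  rewrite ler_sqrt ?mulr_ge0 ?sqr_ge0 ?sumr_ge0 // => [|i _]; last exact: cabs2_ge0.
  rewrite mulr_sumr; apply: ler_sum => i _; apply: ler_wpM2r; first exact: cabs2_ge0.
  by have /andP[e0 eiM] := eM i; rewrite ler_sqr // ?nnegrE.
by rewrite sqrtrM ?sqr_ge0 // sqrtr_sqr ger0_norm // -[leRHS]mulr1 ler_wpM2l.
Qed.

End DiagonalOperatorNorm.

Section UniformWalshMoments.
Variables (R : realType) (n t : nat).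
Local Notation index := ({ffun 'I_t -> qbasis n} * {ffun 'I_t -> qbasis n})%type.

Lemma haar_moment_op (p q : index) :
  @moment_op R n t (@haar_diag R n) p q = (p == q)%:R * [forall x, occ_diff p x == 0]%:R.
Proof.
rewrite /moment_op /haar_diag.
under [X in iter_avg _ X]eq_fun do rewrite moment_diag_expi.
rewrite iter_avg_expi ?enum_uniq // big_pred0 ?expi0 ?mulr1; last by move=> x; rewrite mem_enum.
have -> : all (fun x => occ_diff p x == 0) (enum (qbasis n)) = [forall x, occ_diff p x == 0].
  by apply/allP/forallP => [h x|h x _]; [apply: h; rewrite mem_enum | apply: h].
by case: [forall x, _]; rewrite ?mulr1 ?mulr0.
Qed.

Lemma zsign_walsh (a x : qbasis n) : zsign R a x = (walsh a x)%:~R.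
Proof.
apply: (big_ind2 (fun (u : R) (v : int) => u = v%:~R)) => //.
  by move=> u1 v1 u2 v2 -> ->; rewrite intrM.
by move=> j _; case: ifP.
Qed.

Lemma walsh_transform_occ_diff (a : qbasis n) (p : index) :
  walsh_transform (occ_diff p) a = \sum_k walsh a (p.1 k) - \sum_k walsh a (p.2 k).
Proof.
rewrite !sum_occ -sumrB; apply: eq_bigr => x _.
by rewrite /occ_diff mulrBr !pmulrn !mulrzz.
Qed.

Lemma walsh_transform_occ_diff_le (a : qbasis n) (p : index) :
  (`|walsh_transform (occ_diff p) a| <= 2 * t)%N.
Proof.
have walsh_word (i : {ffun 'I_t -> qbasis n}) : `|\sum_k walsh a (i k)| <= t%:Z.
  apply: le_trans (ler_norm_sum _ _ _) _.
  by rewrite (eq_bigr (fun _ => 1)) ?sumr_const ?card_ord ?natz // => k _; rewrite normr_walsh.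
rewrite -lez_nat abszE walsh_transform_occ_diff (le_trans (ler_normB _ _)) //.
by rewrite mul2n -addnn PoszD lerD.
Qed.

Lemma moment_Uexp (a : qbasis n) (th : R) (p q : index) :
  @moment R _ t (Uexp a th) p q =
  (p == q)%:R * expi ((walsh_transform (occ_diff p) a)%:~R * th).
Proof.
rewrite /Uexp moment_diag_expi; congr (_ * expi _).
rewrite rmorph_sum mulr_suml; apply: eq_bigr => x _.
by rewrite /= zsign_walsh intrM; ring.
Qed.

Definition walsh_zero_density (p : index) : R :=
  #|[pred a | walsh_transform (occ_diff p) a == 0]|%:R / (2 ^ n)%:R.

(* [avg] is the law of the phase theta: all that matters is that it detects the
   frequencies that can occur, namely those of absolute value at most 2t. *)
Lemma moment_op_walsh (avg : (R -> R[i]) -> R[i]) (nu : distr_diag R n) :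
  (forall F, nu F = rscale (2 ^ n)%:R^-1 (\sum_a avg (fun th => F (Uexp a th)))) ->
  (forall (K : R[i]) (k : int), (`|k| <= 2 * t)%N ->
     avg (fun th => K * expi (k%:~R * th)) = if k == 0 then K else 0) ->
  forall p q : index, @moment_op R n t nu p q = (p == q)%:R * (walsh_zero_density p)%:C%C.
Proof.
move=> nuE avgE p q; rewrite /moment_op nuE.
under eq_bigr do under eq_fun do rewrite moment_Uexp.
under eq_bigr do rewrite avgE ?walsh_transform_occ_diff_le //.
rewrite -big_mkcond sumr_const (@eq_card _ _ [pred a | walsh_transform (occ_diff p) a == 0]) //.
by rewrite rscaleE /walsh_zero_density -mulr_natr rmorphM rmorph_nat; ring.
Qed.

Lemma one_sub_inv_double_ge0 : (0 < t)%N -> 0 <= 1 - (2 * t%:R)^-1 :> R.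
Proof. by move=> t0; rewrite subr_ge0 invf_le1 ?mulr_gt0 ?ltr0n // -natrM ler1n muln_gt0. Qed.

Lemma walsh_zero_density_gap (p : index) : (0 < t)%N ->
  0 <= walsh_zero_density p - [forall x, occ_diff p x == 0]%:R <= 1 - (2 * t%:R)^-1.
Proof.
move=> t0; rewrite /walsh_zero_density; set N0 := #|[pred a | walsh_transform (occ_diff p) a == 0]|.
have P0 : (0 : R) < (2 ^ n)%:R by rewrite ltr0n expn_gt0.
have T0 : (0 : R) < 2 * t%:R by rewrite mulr_gt0 // ltr0n.
have M0 := one_sub_inv_double_ge0 t0.
have [/forallP p0|/forallPn[x px]] := boolP [forall x, occ_diff p x == 0].
  have -> : N0 = (2 ^ n)%N.
    rewrite -card_qbasis; apply: eq_card => a; rewrite !inE /walsh_transform big1 //.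
    by move=> x _; rewrite (eqP (p0 x)) mulr0.
  by rewrite divff ?gt_eqF // subrr lexx.
have bT a : `|walsh_transform (occ_diff p) a| <= (2 * t)%N%:Z.
  by rewrite -abszE lez_nat walsh_transform_occ_diff_le.
have := walsh_support_lower_bound px bT; set N1 := #|_| => support.
have N01 : (N0 + N1 = 2 ^ n)%N.
  by rewrite -card_qbasis -(cardC [pred a | walsh_transform (occ_diff p) a == 0]).
have {}support : ((2 ^ n)%N%:R : R) <= 2 * t%:R * N1%:R.
  by rewrite -natz -natrM -natrX ler_nat -!natrM ler_nat in support *.
rewrite subr0 divr_ge0 ?ler0n ?(ltW P0) //= ler_pdivrMr //.
rewrite -(ler_pM2r T0) mulrAC mulrBl mul1r mulVf ?gt_eqF //.
move: support; rewrite -N01 natrD; set T := 2 * t%:R; nra.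
Qed.

Lemma gD_le_walsh (nu : distr_diag R n) : (0 < t)%N ->
  (forall p q : index, @moment_op R n t nu p q = (p == q)%:R * (walsh_zero_density p)%:C%C) ->
  gD nu t <= 1 - (2 * t%:R)^-1.
Proof.
move=> t0 nuE; apply: (opnorm_diag_le
  (e := fun p => walsh_zero_density p - [forall x, occ_diff p x == 0]%:R)).
- exact: one_sub_inv_double_ge0.
- by move=> p; apply: walsh_zero_density_gap.
- by move=> p q; rewrite nuE haar_moment_op -mulrBr rmorphB /= rmorph_nat.
Qed.

End UniformWalshMoments.

Theorem mainTheorem5 (R : realType) (n t : nat) :
  (1 <= n)%N -> (1 <= t)%N ->
  gD (@nu_cont R n) t <= 1 - (2 * t%:R)^-1 /\
  (forall q : nat, (2 * t < q)%N -> gD (@nu_disc R n q) t <= 1 - (2 * t%:R)^-1).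
Proof.
move=> _ t0; split=> [|q tq]; apply: gD_le_walsh => //.
  by apply: (moment_op_walsh (avg := @avg_cont R)) => // K k _; apply: avg_cont_expi.
apply: (moment_op_walsh (avg := @avg_disc R q)) => // K k k2t.
by apply: avg_disc_expi; apply: leq_ltn_trans tq.
Qed.
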